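(* Let $H$ be a real Hilbert space, $I=\{1,\dots,M\}$, let $f_i,h_i,T_i$ ($i\in I$) satisfy Assumption (A1)–(A4) and the parameters satisfy Condition (C) (described below). Consider the sequences generated by the Distributed Accelerated Parallel Algorithm below, and assume that for each $i\in I$ the sequence $\{y^{(i)}_n\}$ is bounded. Then the sequences $\{T_i(y^{(i)}_n)\}$, $\{x_n\}$, $\{w^{(i)}_n\}$, $\{z_n\}$ and $\{d^{(i)}_n\}$ ($i\in I$) are bounded.
   Context: Assumption (A1): each $f_i:H\to\mathbb{R}$ is continuous and convex. (A2): each $h_i:H\to\mathbb{R}$ is convex and Fréchet differentiable, and $\nabla h_i$ is $(1/L_i)$-Lipschitz continuous for some $L_i>0$. (A3): each $T_i:H\to H$ is firmly nonexpansive, i.e. $\|T_ix-T_iy\|^2\le\langle T_ix-T_iy,x-y\rangle$ for all $x,y$. (A4): $S=\bigcap_{i=1}^M\mathrm{Fix}\,T_i\neq\emptyset$ and, with $\psi=\sum_{i=1}^M(f_i+h_i)$, $\Omega=\{\hat x\in S:\psi(\hat x)=\min_{x\in S}\psi(x)\}\neq\emptyset$. Condition (C): $\{\theta_n\},\{\lambda_n\},\{\beta_n\},\{\alpha_n\}$ are decreasing real sequences converging to $0$ with $\theta_n\in[0,1)$, $\lambda_n\in(0,2\min_{i\in I}L_i]$, $\beta_n\in(0,1]$, $\alpha_n\in(0,1]$, and: (C1) $\sum_n\alpha_n=\infty$; (C2) $\lim_n\frac{1}{\alpha_{n+1}}\big|\frac{1}{\lambda_{n+1}}-\frac{1}{\lambda_n}\big|=0$;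 (C3) $\lim_n\frac{1}{\lambda_{n+1}}\big|1-\frac{\alpha_n}{\alpha_{n+1}}\big|=0$; (C4) $\lim_n\frac{\alpha_n}{\lambda_n}=0$; (C5) $\lim_n\frac{\theta_n}{\alpha_{n+1}\lambda_{n+1}}=0$; (C6) $\frac{\lambda_n}{\lambda_{n+1}}\le\sigma$ for some $\sigma\ge1$; (C7) $\lim_n\frac{\beta_n}{\alpha_{n+1}}=0$. $\mathrm{prox}_{\lambda g}(x)=\arg\min_y\{g(y)+\frac{1}{2\lambda}\|x-y\|^2\}$. Distributed Accelerated Parallel Algorithm: choose $z_0,x_0,x_1\in H$, $u^{(i)}\in H$ and set $d^{(i)}_1=-\nabla h_i(z_0)$ ($i\in I$). For $n=1,2,\dots$: compute $z_n=x_n+\theta_n(x_n-x_{n-1})$; for $i=1,\dots,M$ compute $d^{(i)}_{n+1}=-\nabla h_i(z_n)+\beta_nd^{(i)}_n$, $y^{(i)}_n=\mathrm{prox}_{\lambda_nf_i}(z_n+\lambda_nd^{(i)}_{n+1})$, $w^{(i+1)}_n=\alpha_nu^{(i)}+(1-\alpha_n)T_i(y^{(i)}_n)$; then set $x_{n+1}=\frac1M\sum_{i=1}^Mw^{(i+1)}_n$. *)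

From HB Require Import structures.
From mathcomp Require Import all_boot all_order all_algebra.
From mathcomp Require Import all_classical all_reals all_analysis.
Set Implicit Arguments. Unset Strict Implicit. Unset Printing Implicit Defensive.
Import Order.TTheory GRing.Theory Num.Theory.
Import numFieldNormedType.Exports.
Local Open Scope classical_set_scope.
Local Open Scope ring_scope.

Section Hilbert.
Variables (R : realType) (H : lmodType R) (ip : H -> H -> R).

Definition inner_product : Prop :=
  [/\ (forall x y, ip x y = ip y x),
      (forall a x y z, ip (a *: x + y) z = a * ip x z + ip y z),
      (forall x, 0 <= ip x x) &
      (forall x, ip x x = 0 -> x = 0)].

Definition hnorm (x : H) : R := Num.sqrt (ip x x).

Definition hcomplete : Prop :=
  forall u : nat -> H,
    (forall e : R, 0 < e -> exists N, forall m n, (N <= m)%N -> (N <= n)%N ->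
        hnorm (u m - u n) < e) ->
    exists l, forall e : R, 0 < e -> exists N, forall n, (N <= n)%N ->
        hnorm (u n - l) < e.

Definition hilbert_space : Prop := inner_product /\ hcomplete.

Definition hcontinuous (f : H -> R) : Prop :=
  forall x (e : R), 0 < e -> exists d : R, 0 < d /\
    forall y, hnorm (y - x) < d -> `|f y - f x| < e.

Definition hconvex (f : H -> R) : Prop :=
  forall x y (t : R), 0 <= t <= 1 ->
    f (t *: x + (1 - t) *: y) <= t * f x + (1 - t) * f y.

Definition frechet_gradient (f : H -> R) (g : H -> H) : Prop :=
  forall x (e : R), 0 < e -> exists d : R, 0 < d /\
    forall v, hnorm v < d -> `|f (x + v) - f x - ip (g x) v| <= e * hnorm v.

Definition lipschitz_with (k : R) (g : H -> H) : Prop :=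
  forall x y, hnorm (g x - g y) <= k * hnorm (x - y).

Definition firmly_nonexpansive (T : H -> H) : Prop :=
  forall x y, hnorm (T x - T y) ^+ 2 <= ip (T x - T y) (x - y).

Definition fixed_point (T : H -> H) (x : H) : Prop := T x = x.

Definition is_prox (lam : R) (f : H -> R) (x p : H) : Prop :=
  forall y, f p + (2 * lam)^-1 * hnorm (x - p) ^+ 2
            <= f y + (2 * lam)^-1 * hnorm (x - y) ^+ 2.

Definition bounded_from (k : nat) (u : nat -> H) : Prop :=
  exists B : R, forall n, (k <= n)%N -> hnorm (u n) <= B.

End Hilbert.

Definition decr_to_0 (R : realType) (a : nat -> R) : Prop :=
  (forall n, (1 <= n)%N -> a n.+1 <= a n) /\ a @ \oo --> (0 : R).

(* All estimates are made on the squared norm [ip v v], for which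
   |a + b|^2 <= 2 |a|^2 + 2 |b|^2; hence sequences that are eventually bounded
   are closed under sums and under multiplication by eventually bounded scalars.
   Firm nonexpansiveness and Lipschitz continuity give affine growth bounds such
   as |T v|^2 <= 2 |v|^2 + 2 |T 0|^2, so the bounded y yield bounded T y, then
   bounded w (convex combinations), x (averages) and z. Since beta_n -> 0, the
   recursion d_(n+1) = - grad h (z_n) + beta_n d_n eventually satisfies
   |d_(n+1)|^2 <= C + |d_n|^2 / 2, which keeps d bounded. Only (A2), (A3), the
   ranges of the parameters and beta_n -> 0 are used. *)

From HB Require Import structures.
From mathcomp Require Import all_boot all_order all_algebra.
From mathcomp Require Import all_classical all_reals all_analysis.
From mathcomp Require Import lra.
Set Implicit Arguments. Unset Strict Implicit. Unset Printing Implicit Defensive.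
Import Order.TTheory GRing.Theory Num.Theory.
Import numFieldNormedType.Exports.
Local Open Scope classical_set_scope.
Local Open Scope ring_scope.

Lemma prefix_bounded (R : realDomainType) (q : nat -> R) (N : nat) :
  exists C, forall n, (n < N)%N -> q n <= C.
Proof.
elim: N => [|N [C hC]]; first by exists 0.
exists (Num.max C (q N)) => n; rewrite ltnS leq_eqVlt => /orP[/eqP ->|/hC qC].
  by rewrite le_max lexx orbT.
by rewrite le_max qC.
Qed.

Lemma halving_recursion_bounded (R : realFieldType) (q : nat -> R) (c : R) :
  (\forall n \near \oo, q n.+1 <= c + q n / 2) -> exists K, \forall n \near \oo, q n <= K.
Proof.
move=> [N _ hN]; exists (Num.max (2 * c) (q N)).
have qK m : q (N + m)%N <= Num.max (2 * c) (q N).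
  elim: m => [|m IH]; first by rewrite addn0 le_max lexx orbT.
  rewrite addnS; apply: le_trans (hN _ (leq_addr _ _)) _.
  have : 2 * c <= Num.max (2 * c) (q N) by rewrite le_max lexx.
  lra.
near=> n; rewrite -(subnKC (_ : N <= n)%N) ?qK //; near: n; exact: nbhs_infty_ge.
Unshelve. all: end_near.
Qed.

Section InnerProduct.
Variables (R : realType) (H : lmodType R) (ip : H -> H -> R).
Hypothesis ip_inner : inner_product ip.

Lemma ipC x y : ip x y = ip y x.
Proof. by case: ip_inner. Qed.

Lemma ip_linear a x y z : ip (a *: x + y) z = a * ip x z + ip y z.
Proof. by case: ip_inner. Qed.

Lemma ip0l z : ip 0 z = 0.
Proof. by have := ip_linear (-1) 0 0 z; rewrite scaler0 addr0 mulN1r addNr. Qed.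

Lemma ipDl x y z : ip (x + y) z = ip x z + ip y z.
Proof. by have := ip_linear 1 x y z; rewrite scale1r mul1r. Qed.

Lemma ipZl a x z : ip (a *: x) z = a * ip x z.
Proof. by rewrite -[a *: x]addr0 ip_linear ip0l addr0. Qed.

Lemma ipNl x z : ip (- x) z = - ip x z.
Proof. by rewrite -scaleN1r ipZl mulN1r. Qed.

Lemma ipDr x y z : ip z (x + y) = ip z x + ip z y.
Proof. by rewrite ipC ipDl ipC (ipC y). Qed.

Lemma ipZr a x z : ip z (a *: x) = a * ip z x.
Proof. by rewrite ipC ipZl ipC. Qed.

Lemma ipNr x z : ip z (- x) = - ip z x.
Proof. by rewrite ipC ipNl ipC. Qed.

Definition sqnorm (x : H) : R := ip x x.

Lemma sqnorm_ge0 x : 0 <= sqnorm x.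
Proof. by case: ip_inner => _ _ + _; apply. Qed.

Lemma sqr_hnorm x : hnorm ip x ^+ 2 = sqnorm x.
Proof. by rewrite sqr_sqrtr ?sqnorm_ge0. Qed.

Lemma sqnormZ a x : sqnorm (a *: x) = a ^+ 2 * sqnorm x.
Proof. by rewrite /sqnorm ipZl ipZr mulrA expr2. Qed.

Lemma ip_le_sqnorm x y : 2 * ip x y <= sqnorm x + sqnorm y.
Proof.
have := sqnorm_ge0 (x - y); rewrite /sqnorm !(ipDl, ipDr, ipNl, ipNr) (ipC y x).
lra.
Qed.

Lemma sqnormD_le x y : sqnorm (x + y) <= 2 * sqnorm x + 2 * sqnorm y.
Proof.
have := ip_le_sqnorm x y; rewrite /sqnorm !(ipDl, ipDr) (ipC y x); lra.
Qed.

Lemma sqnorm_split_le x y : sqnorm x <= 2 * sqnorm (x - y) + 2 * sqnorm y.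
Proof. by rewrite -{1}(subrK y x) sqnormD_le. Qed.

Lemma firmly_nonexpansive_sqnorm_le (T : H -> H) : firmly_nonexpansive ip T ->
  forall v, sqnorm (T v) <= 2 * sqnorm v + 2 * sqnorm (T 0).
Proof.
move=> hT v; apply: le_trans (sqnorm_split_le (T v) (T 0)) _; rewrite lerD2r ler_pM2l //.
have := hT v 0; rewrite sqr_hnorm subr0 => hTv.
have := ip_le_sqnorm (T v - T 0) v; rewrite /sqnorm in hTv *; lra.
Qed.

Lemma lipschitz_sqnorm_le (k : R) (g : H -> H) : 0 <= k -> lipschitz_with ip k g ->
  forall v, sqnorm (g v) <= 2 * k ^+ 2 * sqnorm v + 2 * sqnorm (g 0).
Proof.
move=> k0 hg v; apply: le_trans (sqnorm_split_le (g v) (g 0)) _; rewrite lerD2r -mulrA ler_pM2l //.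
have := hg v 0; rewrite subr0 -sqr_hnorm -(sqr_hnorm v) -exprMn => hgv.
by rewrite lerXn2r ?nnegrE ?mulr_ge0 ?sqrtr_ge0.
Qed.

Definition ev_bounded (u : nat -> H) : Prop :=
  exists C : R, \forall n \near \oo, sqnorm (u n) <= C.

Lemma bounded_fromP k u : bounded_from ip k u <-> ev_bounded u.
Proof.
split=> [[B hB]|[C [N _ hN]]].
  exists (B ^+ 2); near=> n; have kn : (k <= n)%N by near: n; exact: nbhs_infty_ge.
  have uB := hB n kn; rewrite -sqr_hnorm lerXn2r ?nnegrE ?sqrtr_ge0 //.
  exact: le_trans (sqrtr_ge0 _) uB.
have [D hD] := prefix_bounded (sqnorm \o u) N.
exists (Num.sqrt (Num.max C D)) => n _; rewrite ler_sqrt ?le_max.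
  by case: (ltnP n N) => [/hD -> | /hN ->]; rewrite ?orbT.
by rewrite (le_trans (sqnorm_ge0 (u N)) (hN N (leqnn N))).
Unshelve. all: end_near.
Qed.

Lemma near_eq_ev_bounded u v : (\forall n \near \oo, u n = v n) -> ev_bounded v -> ev_bounded u.
Proof.
move=> uv [C vC]; exists C; near=> n; rewrite (near uv) //; exact: (near vC).
Unshelve. all: end_near.
Qed.

Lemma ev_bounded_cst v : ev_bounded (fun=> v).
Proof. by exists (sqnorm v); near=> n. Unshelve. all: end_near. Qed.

Lemma ev_boundedD u v : ev_bounded u -> ev_bounded v -> ev_bounded (fun n => u n + v n).
Proof.
move=> [C uC] [D vD]; exists (2 * C + 2 * D); near=> n.
apply: le_trans (sqnormD_le _ _) _; rewrite lerD ?ler_pM2l //; [exact: (near uC) | exact: (near vD)].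
Unshelve. all: end_near.
Qed.

Lemma ev_boundedZ (a : nat -> R) (c : R) u : (\forall n \near \oo, `|a n| <= c) ->
  ev_bounded u -> ev_bounded (fun n => a n *: u n).
Proof.
move=> ac [C uC]; exists (c ^+ 2 * C); near=> n; rewrite sqnormZ.
have an : `|a n| <= c by exact: (near ac).
have un : sqnorm (u n) <= C by exact: (near uC).
have c0 : 0 <= c := le_trans (normr_ge0 _) an.
have a2 : a n ^+ 2 <= c ^+ 2 by rewrite -real_normK ?num_real // lerXn2r ?nnegrE.
have := sqnorm_ge0 (u n); have := sqr_ge0 c; nra.
Unshelve. all: end_near.
Qed.

Lemma ev_boundedN u : ev_bounded u -> ev_bounded (fun n => - u n).
Proof.
move=> bu; under eq_fun do rewrite -scaleN1r.
by apply: (ev_boundedZ (c := 1) _ bu); near=> n; rewrite normrN normr1.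
Unshelve. all: end_near.
Qed.

Lemma ev_boundedB u v : ev_bounded u -> ev_bounded v -> ev_bounded (fun n => u n - v n).
Proof. by move=> bu /ev_boundedN; exact: ev_boundedD. Qed.

Lemma ev_bounded_sum (I : Type) (r : seq I) (F : I -> nat -> H) :
  (forall i, ev_bounded (F i)) -> ev_bounded (fun n => \sum_(i <- r) F i n).
Proof.
move=> bF; elim: r => [|i r IH].
  by under eq_fun do rewrite big_nil; exact: ev_bounded_cst.
by under eq_fun do rewrite big_cons; exact: ev_boundedD.
Qed.

Lemma ev_bounded_comp (g : H -> H) (a b : R) u : 0 <= a ->
  (forall v, sqnorm (g v) <= a * sqnorm v + b) -> ev_bounded u -> ev_bounded (fun n => g (u n)).
Proof.
move=> a0 hg [C uC]; exists (a * C + b); near=> n; apply: le_trans (hg _) _.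
by rewrite lerD2r ler_wpM2l //; exact: (near uC).
Unshelve. all: end_near.
Qed.

Lemma ev_bounded_pred u : ev_bounded u -> ev_bounded (fun n => u n.-1).
Proof. by move=> [C uC]; exists C; apply: near_inftyS. Qed.

Lemma ev_bounded_succ u : ev_bounded (fun n => u n.+1) -> ev_bounded u.
Proof. by move=> [C uC]; exists C; apply: near_inftyS. Qed.

Lemma ev_bounded_recursion (g d : nat -> H) (b : nat -> R) : b @ \oo --> 0 ->
  (\forall n \near \oo, d n.+1 = g n + b n *: d n) -> ev_bounded g -> ev_bounded d.
Proof.
move=> b0 dS [C gC]; apply: halving_recursion_bounded (2 * C) _.
have /cvgr0Pnorm_lt/(_ 2^-1 ltac:(lra)) bhalf := b0; near=> n.
rewrite (near dS) //; apply: le_trans (sqnormD_le _ _) _; rewrite sqnormZ.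
have bn : `|b n| < 2^-1 by exact: (near bhalf).
have b2 : b n ^+ 2 <= 4^-1.
  by rewrite -real_normK ?num_real //; have := normr_ge0 (b n); nra.
have gn : sqnorm (g n) <= C by exact: (near gC).
have := ler_wpM2r (sqnorm_ge0 (d n)) b2; lra.
Unshelve. all: end_near.
Qed.

End InnerProduct.

Theorem lemma5 (R : realType) (H : lmodType R) (ip : H -> H -> R)
  (M : nat) (f h : 'I_M -> H -> R) (gradh : 'I_M -> H -> H) (L : 'I_M -> R)
  (T : 'I_M -> H -> H)
  (theta lam beta alpha : nat -> R) (sigma : R)
  (u : 'I_M -> H) (x z : nat -> H) (d y w : nat -> 'I_M -> H) :
  hilbert_space ip ->
  (0 < M)%N ->
  (* (A1) *)
  (forall i, hcontinuous ip (f i) /\ hconvex (f i)) ->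
  (* (A2) *)
  (forall i, 0 < L i /\ hconvex (h i) /\ frechet_gradient ip (h i) (gradh i)
             /\ lipschitz_with ip (L i)^-1 (gradh i)) ->
  (* (A3) *)
  (forall i, firmly_nonexpansive ip (T i)) ->
  (* (A4) *)
  (exists p, forall i, fixed_point (T i) p) ->
  (exists xh, (forall i, fixed_point (T i) xh) /\
     forall v, (forall i, fixed_point (T i) v) ->
       \sum_(i < M) (f i xh + h i xh) <= \sum_(i < M) (f i v + h i v)) ->
  (* Condition (C) *)
  decr_to_0 theta -> decr_to_0 lam -> decr_to_0 beta -> decr_to_0 alpha ->
  (forall n, (1 <= n)%N ->
     [/\ 0 <= theta n < 1,
         0 < lam n /\ (forall i, lam n <= 2 * L i),
         0 < beta n <= 1 & 0 < alpha n <= 1]) ->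
  (* (C1) *)
  [series alpha k]_k @ \oo --> +oo ->
  (* (C2) *)
  (fun n => (alpha n.+1)^-1 * `|(lam n.+1)^-1 - (lam n)^-1|) @ \oo --> (0 : R) ->
  (* (C3) *)
  (fun n => (lam n.+1)^-1 * `|1 - alpha n / alpha n.+1|) @ \oo --> (0 : R) ->
  (* (C4) *)
  (fun n => alpha n / lam n) @ \oo --> (0 : R) ->
  (* (C5) *)
  (fun n => theta n / (alpha n.+1 * lam n.+1)) @ \oo --> (0 : R) ->
  (* (C6) *)
  1 <= sigma -> (forall n, (1 <= n)%N -> lam n / lam n.+1 <= sigma) ->
  (* (C7) *)
  (fun n => beta n / alpha n.+1) @ \oo --> (0 : R) ->
  (* the algorithm *)
  (forall i, d 1%N i = - gradh i (z 0%N)) ->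
  (forall n, (1 <= n)%N ->
     [/\ z n = x n + theta n *: (x n - x n.-1),
         (forall i, d n.+1 i = - gradh i (z n) + beta n *: d n i),
         (forall i, is_prox ip (lam n) (f i) (z n + lam n *: d n.+1 i) (y n i)),
         (forall i, w n i = alpha n *: u i + (1 - alpha n) *: T i (y n i)) &
         x n.+1 = (M%:R)^-1 *: \sum_(i < M) w n i]) ->
  (* boundedness of the y^{(i)} *)
  (forall i, bounded_from ip 1 (fun n => y n i)) ->
  (forall i, bounded_from ip 1 (fun n => T i (y n i))) /\
  bounded_from ip 0 x /\
  (forall i, bounded_from ip 1 (fun n => w n i)) /\
  bounded_from ip 0 z /\
  (forall i, bounded_from ip 1 (fun n => d n i)).
Proof.
move=> [ipI _] _ _ smooth_h T_firm _ _ _ _ [_ beta_to0] _ params _ _ _ _ _ _ _ _ _ iter y_bd.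
have alpha_le1 : \forall n \near \oo, `|alpha n| <= 1.
  by apply: filterS (nbhs_infty_ge 1) => n /params[_ _ _ /andP[? ?]]; rewrite ger0_norm; lra.
have alphaC_le1 : \forall n \near \oo, `|1 - alpha n| <= 1.
  by apply: filterS (nbhs_infty_ge 1) => n /params[_ _ _ /andP[? ?]]; rewrite ger0_norm; lra.
have theta_le1 : \forall n \near \oo, `|theta n| <= 1.
  by apply: filterS (nbhs_infty_ge 1) => n /params[/andP[? ?] _ _ _]; rewrite ger0_norm; lra.
have Ty_bd i : ev_bounded ip (fun n => T i (y n i)).
  apply: ev_bounded_comp (firmly_nonexpansive_sqnorm_le ipI (T_firm i)) _ => //.
  exact/(bounded_fromP ipI).
have w_bd i : ev_bounded ip (w ^~ i).
  apply: (near_eq_ev_bounded _ (ev_boundedD ipI (ev_boundedZ ipI alpha_le1 (ev_bounded_cst ip (u i)))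
                                               (ev_boundedZ ipI alphaC_le1 (Ty_bd i)))).
  by apply: filterS (nbhs_infty_ge 1) => n /iter[_ _ _ ->].
have x_bd : ev_bounded ip x.
  have M1 : \forall n \near \oo, `|M%:R^-1 : R| <= `|M%:R^-1| by near=> n.
  apply/ev_bounded_succ/(near_eq_ev_bounded _ (ev_boundedZ ipI M1 (ev_bounded_sum ipI _ w_bd))).
  by apply: filterS (nbhs_infty_ge 1) => n /iter[_ _ _ _ ->].
have z_bd : ev_bounded ip z.
  apply: (near_eq_ev_bounded _ (ev_boundedD ipI x_bd
            (ev_boundedZ ipI theta_le1 (ev_boundedB ipI x_bd (ev_bounded_pred x_bd))))).
  by apply: filterS (nbhs_infty_ge 1) => n /iter[->].
have d_bd i : ev_bounded ip (d ^~ i).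
  have [L0 [_ [_ gradL]]] := smooth_h i.
  have grad_bd : ev_bounded ip (fun n => - gradh i (z n)).
    apply/(ev_boundedN ipI)/(ev_bounded_comp _ (lipschitz_sqnorm_le ipI _ gradL) z_bd).
      by rewrite mulr_ge0 ?sqr_ge0.
    by rewrite invr_ge0 ltW.
  apply: (ev_bounded_recursion ipI beta_to0 _ grad_bd).
  by apply: filterS (nbhs_infty_ge 1) => n /iter[_ ->].
by do !split=> *; apply/(bounded_fromP ipI); auto.
Unshelve. all: end_near.
Qed.
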